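(* (i) Let $d\ge0$ be an integer and let $p$ be the real polynomial of degree at most $d$ minimizing $$\int_0^1\bigl(1-q(z)z\bigr)^2\,dz$$ over all real polynomials $q$ of degree at most $d$. Then $p(z)>0$ for all $z\in(0,1]$. (ii) Let $d\ge0$ be an integer and $0<\mu<1$, and let $T_{d+1}$ be the Chebyshev polynomial of the first kind of degree $d+1$. Define $$r(z)=\frac{T_{d+1}\!\left(\frac{1+\mu-2z}{1-\mu}\right)}{T_{d+1}\!\left(\frac{1+\mu}{1-\mu}\right)},\qquad p(z)=\frac{1-r(z)}{z}.$$ Then $p$ is a polynomial of degree $d$ and $p(z)>0$ for all $z\in(0,1]$.
   Context: The Chebyshev polynomial of the first kind $T_k$ is the polynomial satisfying $T_k(\cos\theta)=\cos(k\theta)$. *)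

From Stdlib Require Import Reals.
From Coquelicot Require Import Coquelicot.
From mathcomp Require Import all_boot all_algebra.
From mathcomp Require Import Rstruct.

Local Open Scope ring_scope.

(* Pairs (T_k, T_{k+1}) of Chebyshev polynomials of the first kind,
   via T_0 = 1, T_1 = X, T_{k+2} = 2 X T_{k+1} - T_k
   (the unique polynomials with T_k(cos t) = cos(k t)). *)
Fixpoint chebT_pair (k : nat) : {poly R} * {poly R} :=
  match k with
  | O => (1, 'X)
  | S k' => let: (a, b) := chebT_pair k' in (b, 2%:R *: ('X * b) - a)
  end.

Definition chebT (k : nat) : {poly R} := (chebT_pair k).1.

Local Close Scope ring_scope.
Local Open Scope R_scope.

Definition lsq_obj (q : {poly R}) : R :=
  RInt (fun z => (1 - horner q z * z) ^ 2) 0 1.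

Definition cheb_r (d : nat) (mu z : R) : R :=
  horner (chebT (S d)) ((1 + mu - 2 * z) / (1 - mu))
  / horner (chebT (S d)) ((1 + mu) / (1 - mu)).

(* Write [r = 1 - z p] for the least-squares minimiser [p]. The normal
   equations say that [r] is orthogonal, for the weight [z dz] on [0,1], to all
   polynomials of degree [<= d]: [r] is the degree-[n = d+1] orthogonal
   polynomial of that weight with [r(0) = 1], so it solves the Jacobi equation
   [z(1-z) r'' + (2-3z) r' + n(n+2) r = 0]. Sonin's function
   [S = n(n+2) r^2 + z(1-z) r'^2] then has [S' = (4z-3) r'^2], so on [0,1] the
   quantity [n(n+2) r^2 <= S] stays below [max (S 0) (S 1) = n(n+2) max 1 (r 1)^2],
   and [r(1)^2 < 1] follows from comparing [r] with its reflection [r(1-z)].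
   Hence [r < 1], i.e. [z p(z) > 0], on (0,1].
   For (ii), [|T_{d+1}| <= 1] on [-1,1] and [T_{d+1}] increases on [1,oo), while
   [(1+mu-2z)/(1-mu)] ranges over [-1, (1+mu)/(1-mu)) for [z] in (0,1]; so
   [r < 1] there, and [r(0) = 1] makes [1 - r] divisible by [z]. *)

From Stdlib Require Import Reals.
From Coquelicot Require Import Coquelicot.
From mathcomp Require Import all_boot all_algebra.
From mathcomp Require Import Rstruct.
From mathcomp Require Import all_order ring lra.
Import Order.Theory GRing.Theory Num.Theory.

Local Open Scope ring_scope.

Lemma root0_mulX (A : nzRingType) (f : {poly A}) n :
  (size f <= n.+1)%N -> f.[0] = 0 -> exists2 q : {poly A}, (size q <= n)%N & f = 'X * q.
Proof.
move=> size_f f0; have /factor_theorem [q fE] : root f 0 by apply/rootP.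
exists q; last by rewrite fE subr0 commr_polyX.
apply/leq_sizeP => j le_nj.
by move/leq_sizeP: size_f => /(_ j.+1 le_nj); rewrite fE subr0 coefMX.
Qed.

Lemma is_derive_horner (p : {poly R}) x : is_derive (horner p) x p^`().[x].
Proof.
elim/poly_ind: p => [|p c IHp].
  rewrite deriv0 horner0.
  apply: (@is_derive_ext R_AbsRing R_NormedModule (fun _ => 0%R)).
    by move=> t; rewrite horner0.
  exact: (@is_derive_const R_AbsRing R_NormedModule).
rewrite derivMXaddC.
apply: (@is_derive_ext R_AbsRing R_NormedModule (fun t => p.[t] * t + c)).
  by move=> t; rewrite hornerMXaddC.
have -> : (p + p^`() * 'X).[x] = Hierarchy.plus (Hierarchy.plus
    (Hierarchy.mult p^`().[x] x) (Hierarchy.mult p.[x] Hierarchy.one)) Hierarchy.zero.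
  rewrite hornerD hornerM hornerX.
  change (p.[x] + p^`().[x] * x = p^`().[x] * x + p.[x] * 1 + 0); ring.
apply: is_derive_plus (is_derive_const c x).
exact: is_derive_mult IHp (is_derive_id x) Rmult_comm.
Qed.

Lemma continuous_horner (p : {poly R}) x : continuous (horner p) x.
Proof. by apply: ex_derive_continuous; exists p^`().[x]; exact: is_derive_horner. Qed.

Lemma is_RInt_horner_deriv (p : {poly R}) a b :
  is_RInt (horner p^`()) a b (p.[b] - p.[a]).
Proof.
apply: (is_RInt_derive (horner p)) => x _; first exact: is_derive_horner.
exact: continuous_horner.
Qed.

Lemma deriv_ge0_horner_le (p : {poly R}) a b : a <= b ->
  (forall x, a < x < b -> 0 <= p^`().[x]) -> p.[a] <= p.[b].
Proof.
move=> le_ab p'_ge0; rewrite -subr_ge0.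
rewrite -(is_RInt_unique _ _ _ _ (is_RInt_horner_deriv p a b)).
apply/RleP; apply: RInt_ge_0; first exact/RleP.
  by eexists; exact: is_RInt_horner_deriv.
by move=> x [/RltP ax /RltP xb]; apply/RleP; apply: p'_ge0; rewrite ax xb.
Qed.

Lemma deriv_le0_horner_ge (p : {poly R}) a b : a <= b ->
  (forall x, a < x < b -> p^`().[x] <= 0) -> p.[b] <= p.[a].
Proof.
move=> le_ab p'_le0; rewrite -lerN2 -!hornerN.
by apply: deriv_ge0_horner_le => // x /p'_le0; rewrite derivN hornerN oppr_ge0.
Qed.

Lemma poly_eq0_on_interval (F : realFieldType) (p : {poly F}) (a b : F) : a < b ->
  (forall x, a < x < b -> p.[x] = 0) -> p = 0.
Proof.
move=> lt_ab p_eq0; apply/eqP/negPn/negP => p_neq0.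
pose xs := [seq a + (b - a) / k.+2%:R | k <- iota 0 (size p)].
have := max_poly_roots p_neq0 (rs := xs).
rewrite size_map size_iota ltnn => roots_bound.
suff : false by []; apply: roots_bound.
- apply/allP => _ /mapP [k _ ->]; apply/rootP; apply: p_eq0.
  have lt0k : 0 < k.+2%:R :> F by rewrite ltr0n.
  have h_gt0 : 0 < (b - a) / k.+2%:R by rewrite divr_gt0 // subr_gt0.
  have h_lt : (b - a) / k.+2%:R < b - a.
    by rewrite ltr_pdivrMr // ltr_pMr ?ltr1n // subr_gt0.
  move: h_gt0 h_lt; set h := (b - a) / _ => h_gt0 h_lt.
  by apply/andP; split; lra.
- rewrite map_inj_uniq ?iota_uniq // => m k /addrI.
  have ba_neq0 : b - a != 0 by rewrite subr_eq0 gt_eqF.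
  move/(congr1 (fun t => (b - a) / t)).
  rewrite !invf_div !mulrA ![(b - a) * _]mulrC !mulfK //.
  by move/eqP; rewrite eqr_nat => /eqP [].
Qed.

Lemma deriv_le0_horner_lt (p : {poly R}) a b : a < b ->
  (forall x, a < x < b -> p^`().[x] <= 0) -> p^`() != 0 -> p.[b] < p.[a].
Proof.
move=> lt_ab p'_le0 p'_neq0; rewrite lt_neqAle deriv_le0_horner_ge ?ltW // andbT.
apply: contra p'_neq0 => /eqP pab.
have p_le x y : a <= x -> x <= y -> y <= b -> p.[y] <= p.[x].
  move=> ax xy yb; apply: deriv_le0_horner_ge => // t /andP [xt ty].
  by apply: p'_le0; apply/andP; split; lra.
have pC : p - (p.[a])%:P = 0.
  apply: (@poly_eq0_on_interval _ _ a b lt_ab) => x /andP [ax xb].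
  have := p_le a x (lexx a) (ltW ax) (ltW xb); have := p_le x b (ltW ax) (ltW xb) (lexx b).
  by rewrite !hornerE; lra.
by move/eqP: pC; rewrite subr_eq0 => /eqP ->; rewrite derivC.
Qed.

Definition antideriv {F : numFieldType} (f : {poly F}) : {poly F} :=
  \poly_(i < (size f).+1) (if i is j.+1 then f`_j / j.+1%:R else 0).

Lemma antiderivK {F : numFieldType} (f : {poly F}) : (antideriv f)^`() = f.
Proof.
apply/polyP => i; rewrite coef_deriv coef_poly ltnS.
case: ltnP => [_|le_fi]; last by rewrite mul0rn nth_default.
by rewrite -[_ / _ *+ _]mulr_natr divfK // pnatr_eq0.
Qed.

Definition int01 (f : {poly R}) : R := RInt (horner f) 0 1.

Lemma int01_deriv f : int01 f^`() = f.[1] - f.[0].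
Proof. exact: is_RInt_unique (is_RInt_horner_deriv f 0 1). Qed.

Lemma is_RInt01 f : is_RInt (horner f) 0 1 (int01 f).
Proof.
apply: RInt_correct; have := is_RInt_horner_deriv (antideriv f) 0 1.
by rewrite antiderivK; exists ((antideriv f).[1] - (antideriv f).[0]).
Qed.

Lemma int01D f g : int01 (f + g) = int01 f + int01 g.
Proof.
apply: is_RInt_unique.
apply: (is_RInt_ext (fun t => Hierarchy.plus f.[t] g.[t])).
  by move=> x _; rewrite hornerD.
exact: is_RInt_plus (is_RInt01 f) (is_RInt01 g).
Qed.

Lemma int01Z c f : int01 (c *: f) = c * int01 f.
Proof.
apply: is_RInt_unique.
apply: (is_RInt_ext (fun t => Hierarchy.scal c f.[t])).
  by move=> x _; rewrite hornerZ.
exact: is_RInt_scal (is_RInt01 f).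
Qed.

Lemma int01_polyCM c f : int01 (c%:P * f) = c * int01 f.
Proof. by rewrite mul_polyC int01Z. Qed.

Lemma int01B f g : int01 (f - g) = int01 f - int01 g.
Proof. by rewrite int01D -scaleN1r int01Z mulN1r. Qed.

Lemma int01Mn f k : int01 (f *+ k) = int01 f *+ k.
Proof. by rewrite -scaler_nat int01Z mulr_natl. Qed.

Lemma int01_ge0 f : (forall x, 0 < x < 1 -> 0 <= f.[x]) -> 0 <= int01 f.
Proof.
move=> f_ge0; apply/RleP; apply: RInt_ge_0; first exact/RleP/ler01.
  by eexists; exact: is_RInt01.
by move=> x [/RltP x_gt0 /RltP x_lt1]; apply/RleP; apply: f_ge0; rewrite x_gt0 x_lt1.
Qed.

Lemma int01_eq0 f : (forall x, 0 < x < 1 -> 0 <= f.[x]) -> int01 f = 0 -> f = 0.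
Proof.
move=> f_ge0 int_f0; set F := antideriv f.
have F_le x y : 0 <= x -> x <= y -> y <= 1 -> F.[x] <= F.[y].
  move=> x_ge0 le_xy y_le1; apply: deriv_ge0_horner_le => // t /andP [xt ty].
  by rewrite antiderivK f_ge0 //; apply/andP; split; lra.
have FC : F - (F.[0])%:P = 0.
  apply: (@poly_eq0_on_interval _ _ 0 1 ltr01) => x /andP [x_gt0 x_lt1].
  have := F_le 0 x (lexx 0) (ltW x_gt0) (ltW x_lt1).
  have := F_le x 1 (ltW x_gt0) (ltW x_lt1) (lexx 1).
  move: int_f0; rewrite -{1}(antiderivK f) int01_deriv hornerD hornerN hornerC -/F.
  lra.
by rewrite -(antiderivK f) -/F; move/eqP: FC; rewrite subr_eq0 => /eqP ->; rewrite derivC.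
Qed.

Lemma int01_sqr_ge0 f : 0 <= int01 (f * f).
Proof. by apply: int01_ge0 => x _; rewrite hornerM -expr2 sqr_ge0. Qed.

Lemma int01_sqr_eq0 f : int01 (f * f) = 0 -> f = 0.
Proof.
move=> int_ff0; have : f * f = 0.
  by apply: int01_eq0 int_ff0 => x _; rewrite hornerM -expr2 sqr_ge0.
by move/eqP; rewrite mulf_eq0 orbb => /eqP.
Qed.

Lemma int01_reflect f g : (forall x, g.[x] = f.[1 - x]) -> int01 g = int01 f.
Proof.
move=> gE; set F := antideriv f.
have -> : int01 g = int01 ((- (F \Po (1 - 'X)))^`()).
  rewrite /int01; apply: RInt_ext => x _.
  rewrite derivN deriv_comp antiderivK derivB derivX derivC sub0r mulrN1 opprK.
  by rewrite horner_comp !hornerE gE.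
rewrite int01_deriv -(antiderivK f) int01_deriv -/F.
by rewrite !hornerN !horner_comp !hornerE subrr subr0 opprK addrC.
Qed.

Definition jacobi_op (y : {poly R}) : {poly R} :=
  'X * (1 - 'X) * y^`()^`() + (2%:R - 'X *+ 3) * y^`().

Lemma coef_jacobi_op (y : {poly R}) k :
  (jacobi_op y)`_k = y`_k.+1 *+ (k.+1 * k.+2) - y`_k *+ (k * k.+2).
Proof.
have -> : jacobi_op y =
    'X * y^`()^`() - 'X * ('X * y^`()^`()) + y^`() *+ 2 - ('X * y^`()) *+ 3.
  by rewrite /jacobi_op; ring.
rewrite !coefD !coefN !coefMn !coefXM !coef_deriv.
by case: k => [|[|k]] /=; ring.
Qed.

Lemma size_jacobi_op (y : {poly R}) n : (size y <= n)%N -> (size (jacobi_op y) <= n)%N.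
Proof.
move/leq_sizeP => y_eq0; apply/leq_sizeP => j le_nj.
by rewrite coef_jacobi_op !y_eq0 ?mul0rn ?subrr // (leq_trans le_nj).
Qed.

Lemma int01_jacobi_op (f g : {poly R}) :
  int01 ('X * jacobi_op f * g) = - int01 ('X * 'X * (1 - 'X) * f^`() * g^`()).
Proof.
pose M := 'X * 'X * (1 - 'X) * f^`().
have -> : 'X * jacobi_op f * g = (M * g)^`() - M * g^`().
  by rewrite /M /jacobi_op !derivM derivB derivX -polyC1 derivC; ring.
rewrite int01B int01_deriv /M !hornerE.
by rewrite subrr !(mulr0, mul0r) subr0 sub0r.
Qed.

Lemma int01_jacobi_opC (f g : {poly R}) :
  int01 ('X * jacobi_op f * g) = int01 ('X * jacobi_op g * f).
Proof.
rewrite !int01_jacobi_op; congr (- int01 _); ring.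
Qed.

Lemma sonin_deriv (r : {poly R}) k : jacobi_op r + r *+ k = 0 ->
  (r * r *+ k + 'X * (1 - 'X) * (r^`() * r^`()))^`() =
  ('X *+ 4 - 3) * (r^`() * r^`()).
Proof.
move=> r_ode.
have -> : (r * r *+ k + 'X * (1 - 'X) * (r^`() * r^`()))^`() =
    ('X *+ 4 - 3) * (r^`() * r^`()) + (r^`() * (jacobi_op r + r *+ k)) *+ 2.
  by rewrite /jacobi_op !derivD !derivMn !derivM derivB derivX -polyC1 derivC; ring.
by rewrite r_ode mulr0 mul0rn addr0.
Qed.

Definition orthX (n : nat) (r : {poly R}) : Prop :=
  forall q : {poly R}, (size q <= n)%N -> int01 (r * ('X * q)) = 0.

Section OrthogonalPolynomial.

Variables (n : nat) (r : {poly R}).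
Hypotheses (size_r : (size r <= n.+1)%N) (r_orth : orthX n r).

Lemma orthX_jacobi_ode : jacobi_op r + r *+ (n * n.+2) = 0.
Proof.
set h := jacobi_op r + r *+ (n * n.+2).
have size_h : (size h <= n)%N.
  move/leq_sizeP: size_r => r_eq0; apply/leq_sizeP => j le_nj.
  rewrite coefD coef_jacobi_op coefMn (r_eq0 j.+1) // mul0rn sub0r.
  case: (ltngtP j n) => [|lt_nj|<-]; first by rewrite ltnNge le_nj.
    by rewrite r_eq0 // !mul0rn oppr0 add0r.
  by rewrite addrC subrr.
have h_orth (q : {poly R}) : (size q <= n)%N -> int01 ('X * h * q) = 0.
  move=> size_q.
  have -> : 'X * h * q = 'X * jacobi_op r * q + (r * ('X * q)) *+ (n * n.+2).
    by rewrite /h; ring.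
  rewrite int01D int01Mn r_orth // mul0rn addr0 int01_jacobi_opC.
  have -> : 'X * jacobi_op q * r = r * ('X * jacobi_op q) by ring.
  by rewrite r_orth // size_jacobi_op.
have : 'X * h * h = 0.
  apply: int01_eq0 (h_orth h size_h) => x /andP [x_gt0 _].
  by rewrite -mulrA hornerM hornerX hornerM -expr2 mulr_ge0 ?sqr_ge0 ?ltW.
by move/eqP; rewrite !mulf_eq0 polyX_eq0 orbb => /eqP.
Qed.

Hypotheses (n_gt0 : (0 < n)%N) (r0 : r.[0] = 1).

Lemma orthX_int01_sqr : int01 (r * r) = int01 r.
Proof.
have [q size_q r1E] : exists2 q : {poly R}, (size q <= n)%N & r - 1 = 'X * q.
  apply: root0_mulX; last by rewrite !hornerE r0 subrr.
  by rewrite (leq_trans (size_add _ _)) // geq_max size_r size_opp size_poly1.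
by rewrite -{2}(subrK 1 r) mulrDr mulr1 r1E int01D r_orth // add0r.
Qed.

Lemma orthX_int01_sqr_gt0 : 0 < int01 (r * r).
Proof.
rewrite lt_def int01_sqr_ge0 andbT; apply/eqP => /int01_sqr_eq0 r_eq0.
by move: r0; rewrite r_eq0 horner0 => /eqP; rewrite eq_sym oner_eq0.
Qed.

Lemma orthX_int01_reflect :
  int01 (r * (r \Po (1 - 'X))) = r.[1] * int01 (r * r).
Proof.
set t := r \Po (1 - 'X); set c := r.[1].
have [v size_v tcE] : exists2 v : {poly R}, (size v <= n)%N & t - c%:P = 'X * v.
  apply: root0_mulX; last by rewrite !hornerE horner_comp !hornerE subr0 subrr.
  rewrite (leq_trans (size_add _ _)) // geq_max size_opp size_polyC (leq_trans (leq_b1 _)) // andbT.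
  by rewrite size_comp_poly2 // -opprB size_opp -polyC1 size_XsubC.
rewrite orthX_int01_sqr -(subrK c%:P t) tcE mulrDr int01D r_orth // add0r.
by rewrite mulrC int01_polyCM.
Qed.

(* With [t(x) = r(1 - x)] and [c = r(1)] one gets
   [int (r - c t)^2 = (1 - c^2) int r^2]; if [c^2 = 1] then [r = c t] is
   orthogonal both to [x] and to [1 - x], hence to [1]. *)
Lemma orthX_horner1_sqr_lt1 : r.[1] ^+ 2 < 1.
Proof.
set c := r.[1]; set t := r \Po (1 - 'X); set A := int01 (r * r).
have tE x : t.[x] = r.[1 - x] by rewrite horner_comp !hornerE.
have int_tt : int01 (t * t) = A by apply: int01_reflect => x; rewrite !hornerM tE.
have key : int01 ((r - c%:P * t) * (r - c%:P * t)) = A * (1 - c ^+ 2).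
  have -> : (r - c%:P * t) * (r - c%:P * t) =
      r * r - (c * 2)%:P * (r * t) + (c ^+ 2)%:P * (t * t).
    by rewrite polyCM rmorphXn /=; ring.
  by rewrite int01D int01B !int01_polyCM orthX_int01_reflect int_tt -/A -/c; ring.
have : 0 <= A * (1 - c ^+ 2) by rewrite -key int01_sqr_ge0.
rewrite pmulr_rge0 ?orthX_int01_sqr_gt0 // subr_ge0 le_eqVlt => /orP [/eqP c2|//].
have rE : r = c%:P * t.
  by apply/eqP; rewrite -subr_eq0; apply/eqP/int01_sqr_eq0; rewrite key c2 subrr mulr0.
have int_rX : int01 (r * 'X) = 0 by rewrite -['X]mulr1 r_orth // size_poly1.
have int_r1X : int01 (r * (1 - 'X)) = 0.
  rewrite {1}rE -mulrA int01_polyCM (@int01_reflect (r * 'X)) ?int_rX ?mulr0 // => x.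
  by rewrite !hornerM tE !hornerE.
have := orthX_int01_sqr_gt0; rewrite orthX_int01_sqr -[r in int01 r]mulr1.
by rewrite -(subrK 'X 1) mulrDr int01D int_r1X int_rX addr0 ltxx.
Qed.

Lemma orthX_deriv_neq0 : r^`() != 0.
Proof.
apply/eqP => r'0; have := orthX_jacobi_ode.
rewrite /jacobi_op r'0 deriv0 !mulr0 add0r => /(congr1 (horner^~ 0)).
rewrite add0r hornerMn r0 horner0 => /eqP; rewrite pnatr_eq0 muln_eq0 orbF.
by move/eqP => n0; move: n_gt0; rewrite n0.
Qed.

Lemma orthX_horner_lt1 z : 0 < z <= 1 -> r.[z] < 1.
Proof.
move=> /andP [z_gt0 z_le1].
set k := (n * n.+2)%N; have k_gt0 : 0 < k%:R :> R by rewrite ltr0n muln_gt0 n_gt0.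
set S := r * r *+ k + 'X * (1 - 'X) * (r^`() * r^`()).
have S'E : S^`() = ('X *+ 4 - 3) * (r^`() * r^`()) by apply: sonin_deriv orthX_jacobi_ode.
have S'x x : S^`().[x] = (4 * x - 3) * r^`().[x] ^+ 2.
  by rewrite S'E hornerM hornerD hornerN !hornerMn hornerX hornerM -polyC1 hornerC expr2; ring.
have Sx x : S.[x] = r.[x] ^+ 2 * k%:R + x * (1 - x) * r^`().[x] ^+ 2.
  by rewrite hornerD hornerMn !hornerM hornerD hornerN hornerX hornerC -mulr_natr !expr2.
have S_ge : r.[z] ^+ 2 * k%:R <= S.[z].
  by rewrite Sx lerDl mulr_ge0 ?sqr_ge0 // mulr_ge0 ?subr_ge0 //; apply: ltW.
suff rz2 : r.[z] ^+ 2 < 1 by move: rz2; rewrite expr2; nra.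
rewrite -(ltr_pM2r k_gt0) mul1r (le_lt_trans S_ge) //.
case: (lerP (3 / 4) z) => z34.
  have : S.[z] <= S.[1].
    apply: deriv_ge0_horner_le => // x /andP [x_gt x_lt].
    by rewrite S'x mulr_ge0 ?sqr_ge0 //; lra.
  move/le_lt_trans; apply.
  by rewrite Sx subrr mulr0 mul0r addr0 gtr_pMl // orthX_horner1_sqr_lt1.
have -> : k%:R = S.[0] by rewrite Sx r0 expr1n mul1r !mul0r addr0.
apply: deriv_le0_horner_lt => // [x /andP [x_gt x_lt]|].
  by rewrite S'x nmulr_rle0 ?sqr_ge0 //; lra.
rewrite S'E mulf_neq0 ?mulf_neq0 ?orthX_deriv_neq0 //.
apply/eqP => /(congr1 (horner^~ 0)); rewrite hornerD hornerN !hornerMn hornerX mul0rn sub0r.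
by rewrite -polyC1 hornerC horner0 => /eqP; rewrite oppr_eq0 pnatr_eq0.
Qed.

End OrthogonalPolynomial.

Lemma quadratic_ge0_linear_eq0 (F : realFieldType) (b c : F) : 0 <= c ->
  (forall t, 0 <= t ^+ 2 * c - 2 * t * b) -> b = 0.
Proof.
move=> c_ge0 quad_ge0; set u := b / (c + 1).
have bE : b = u * (c + 1) by rewrite /u divfK // gt_eqF // ltr_wpDl.
have := quad_ge0 u; rewrite bE => h.
have u2_le0 : u * u * (c + 2) <= 0 by nra.
have : u * u <= 0 by move: u2_le0; rewrite pmulr_lle0 //; lra.
nra.
Qed.

Lemma lsq_objE q : lsq_obj q = int01 ((1 - q * 'X) * (1 - q * 'X)).
Proof. by rewrite /lsq_obj /int01; apply: RInt_ext => x _; rewrite RpowE expr2 !hornerE. Qed.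

Lemma lsq_min_orthX d (p : {poly R}) : (size p <= d.+1)%N ->
  (forall q : {poly R}, (size q <= d.+1)%N -> lsq_obj p <= lsq_obj q) ->
  orthX d.+1 (1 - p * 'X).
Proof.
move=> size_p p_min q size_q; set r := 1 - p * 'X.
apply: (@quadratic_ge0_linear_eq0 _ _ (int01 ('X * q * ('X * q)))) => [|t].
  exact: int01_sqr_ge0.
have size_pq : (size (p + t *: q)%R <= d.+1)%N.
  by rewrite (leq_trans (size_add _ _)) // geq_max size_p (leq_trans (size_scale_leq _ _)).
have := p_min _ size_pq; rewrite !lsq_objE -subr_ge0.
have -> : (1 - (p + t *: q) * 'X) * (1 - (p + t *: q) * 'X) =
    r * r + (t ^+ 2)%:P * ('X * q * ('X * q)) - (2 * t)%:P * (r * ('X * q)).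
  by rewrite -mul_polyC /r rmorphXn polyCM /=; ring.
by rewrite int01B int01D !int01_polyCM -/r; lra.
Qed.

Lemma lsq_min_horner_gt0 d (p : {poly R}) : (size p <= d.+1)%N ->
  (forall q : {poly R}, (size q <= d.+1)%N -> lsq_obj p <= lsq_obj q) ->
  forall z, 0 < z <= 1 -> 0 < p.[z].
Proof.
move=> size_p p_min z /andP [z_gt0 z_le1]; set r := 1 - p * 'X.
have size_r : (size r <= d.+2)%N.
  rewrite (leq_trans (size_add _ _)) // geq_max size_poly1 size_opp.
  by rewrite (leq_trans (size_mul_leq _ _)) // size_polyX addn2.
have r0 : r.[0] = 1 by rewrite /r hornerD hornerN hornerMX hornerC mulr0 subr0.
have := @orthX_horner_lt1 d.+1 r size_r (@lsq_min_orthX _ _ size_p p_min) (ltn0Sn d) r0 z.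
rewrite z_gt0 z_le1 => /(_ isT); rewrite /r hornerD hornerN hornerMX hornerC.
by rewrite gtrBl pmulr_lgt0.
Qed.

Lemma chebT0 : chebT 0 = 1. Proof. by []. Qed.

Lemma chebT1 : chebT 1 = 'X. Proof. by []. Qed.

Lemma chebTSS k : chebT k.+2 = 2%:R *: ('X * chebT k.+1) - chebT k.
Proof. by rewrite /chebT /=; case: (chebT_pair k). Qed.

Lemma horner_chebTSS k x :
  (chebT k.+2).[x] = 2 * x * (chebT k.+1).[x] - (chebT k).[x].
Proof. by rewrite chebTSS hornerD hornerN hornerZ hornerM hornerX mulrA. Qed.

Lemma size_chebT k : size (chebT k) = k.+1.
Proof.
suff : size (chebT k) = k.+1 /\ size (chebT k.+1) = k.+2 by case.
elim: k => [|k [IHk IHk1]]; first by rewrite chebT0 chebT1 size_poly1 size_polyX.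
split=> //; have T1_neq0 : chebT k.+1 != 0 by rewrite -size_poly_eq0 IHk1.
have size_XT : size (2%:R *: ('X * chebT k.+1)) = k.+3.
  by rewrite size_scale ?pnatr_eq0 // mulrC size_mulX // IHk1.
by rewrite chebTSS size_addl size_XT // size_opp IHk.
Qed.

Lemma chebT_cos k t : (chebT k).[cos t] = cos (k%:R * t).
Proof.
suff : (chebT k).[cos t] = cos (k%:R * t) /\
       (chebT k.+1).[cos t] = cos (k.+1%:R * t) by case.
elim: k => [|k [IHk IHk1]].
  by rewrite chebT0 chebT1 hornerC hornerX !RmultE mulr0n mul0r cos_0 mulr1n mul1r.
split=> //; rewrite horner_chebTSS IHk IHk1 !RmultE.
have cosD_t := cosD (k.+1%:R * t) t.
have cosB_t := cosD (k.+1%:R * t) (- t).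
rewrite cos_neg sin_neg ?RmultE ?RplusE ?RoppE in cosD_t cosB_t.
have -> : k.+2%:R * t = k.+1%:R * t + t by rewrite -addn1 natrD; ring.
have -> : k%:R * t = k.+1%:R * t + - t by rewrite -addn1 natrD; ring.
by rewrite cosD_t cosB_t; ring.
Qed.

Lemma chebT_le1 k x : -1 <= x <= 1 -> (chebT k).[x] <= 1.
Proof.
move=> /andP [/RleP x_ge /RleP x_le].
rewrite -(cos_acos x (conj x_ge x_le)) chebT_cos.
by apply/RleP; case: (COS_bound (k%:R * acos x)).
Qed.

Lemma chebT_horner1 k : (chebT k).[1] = 1.
Proof. by have := chebT_cos k 0; rewrite RmultE mulr0 cos_0. Qed.

Lemma chebT_ge1 k x : 1 <= x -> 1 <= (chebT k).[x] <= (chebT k.+1).[x].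
Proof.
move=> x_ge1; elim: k => [|k /andP [IHk IHk1]].
  by rewrite chebT0 chebT1 hornerC hornerX lexx.
by rewrite horner_chebTSS; apply/andP; split; nra.
Qed.

Lemma chebT_increment k x y : 1 <= x -> x < y ->
  0 <= (chebT k).[y] - (chebT k).[x] < (chebT k.+1).[y] - (chebT k.+1).[x].
Proof.
move=> x_ge1 lt_xy; elim: k => [|k /andP [IHk IHk1]].
  by rewrite chebT0 chebT1 !hornerC !hornerX subrr lexx subr_gt0.
have /andP [Tx_ge1 _] := chebT_ge1 k.+1 x x_ge1.
rewrite !horner_chebTSS; apply/andP; split; nra.
Qed.

Lemma chebT_lt k x y : 1 <= x -> x < y -> (chebT k.+1).[x] < (chebT k.+1).[y].
Proof. by move=> x_ge1 lt_xy; have /andP [gap0 gap] := @chebT_increment k x y x_ge1 lt_xy; lra. Qed.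

Section ChebyshevQuotient.

Variables (d : nat) (mu : R).
Hypotheses (mu_gt0 : 0 < mu) (mu_lt1 : mu < 1).

Let a := (1 - mu)^-1.
Let x0 := (1 + mu) * a.
Let l : {poly R} := (- 2 * a)%:P * 'X + x0%:P.

Let a_gt0 : 0 < a. Proof. by rewrite invr_gt0 subr_gt0. Qed.
Let aK : (1 - mu) * a = 1. Proof. by rewrite mulfV // subr_eq0 eq_sym lt_eqF. Qed.
Let x0_gt1 : 1 < x0. Proof. by rewrite /x0 -{1}aK ltr_pM2r //; have := mu_gt0; lra. Qed.
Let horner_l z : l.[z] = x0 - 2 * a * z.
Proof. by rewrite /l hornerMXaddC hornerC; ring. Qed.
Let chebT_x0_gt1 : 1 < (chebT d.+1).[x0].
Proof. by rewrite -{1}(chebT_horner1 d.+1) (@chebT_lt d _ _ (lexx 1) x0_gt1). Qed.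
Let chebT_x0_gt0 : 0 < (chebT d.+1).[x0].
Proof. exact: lt_trans ltr01 chebT_x0_gt1. Qed.
Let chebT_x0_neq0 : (chebT d.+1).[x0] != 0.
Proof. by rewrite gt_eqF. Qed.

Lemma cheb_rE z : cheb_r d mu z = (chebT d.+1 \Po l).[z] / (chebT d.+1).[x0].
Proof.
rewrite /cheb_r horner_comp horner_l /x0 /a ?RdivE ?RplusE ?RminusE ?RmultE.
by congr (_.[_] / _.[_]); field; rewrite subr_eq0 eq_sym lt_eqF.
Qed.

Lemma cheb_r_lt1 z : 0 < z <= 1 -> cheb_r d mu z < 1.
Proof.
move=> /andP [z_gt0 z_le1].
rewrite cheb_rE ltr_pdivrMr // mul1r horner_comp horner_l.
have lz_lt : x0 - 2 * a * z < x0 by have := a_gt0; nra.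
have lz_ge : -1 <= x0 - 2 * a * z by have := aK; have := a_gt0; rewrite /x0; nra.
case: (lerP (x0 - 2 * a * z) 1) => [lz_le1|lz_gt1].
  by rewrite (le_lt_trans _ chebT_x0_gt1) // chebT_le1 // lz_ge lz_le1.
exact: chebT_lt (ltW lz_gt1) lz_lt.
Qed.

Lemma cheb_quotient : exists P : {poly R},
  [/\ size P = d.+1,
      forall z, z != 0 -> P.[z] = (1 - cheb_r d mu z) / z
    & forall z, 0 < z <= 1 -> 0 < P.[z]].
Proof.
set F := 1 - ((chebT d.+1).[x0])^-1%:P * (chebT d.+1 \Po l).
have horner_F z : F.[z] = 1 - cheb_r d mu z.
  by rewrite /F hornerD hornerN hornerC hornerM hornerC cheb_rE mulrC.
have size_l : size l = 2.
  rewrite /l size_MXaddC polyC_eq0 mulf_eq0 oppr_eq0 pnatr_eq0 (gt_eqF a_gt0) /=.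
  by rewrite size_polyC mulf_neq0 ?oppr_eq0 ?pnatr_eq0 // gt_eqF.
have size_F : size F = d.+2.
  rewrite /F addrC size_addl size_opp size_Cmul ?invr_eq0 //.
    by rewrite size_comp_poly2 // size_chebT.
  by rewrite size_comp_poly2 // size_chebT size_poly1.
have [P _ F_mulX] : exists2 P : {poly R}, (size P <= d.+1)%N & F = 'X * P.
  apply: root0_mulX; first by rewrite size_F.
  by rewrite horner_F cheb_rE horner_comp horner_l mulr0 subr0 divff ?subrr.
have P_neq0 : P != 0.
  by apply: contra_eq_neq size_F => P0; rewrite F_mulX P0 mulr0 size_poly0.
exists P; split.
- by move: size_F; rewrite F_mulX mulrC size_mulX // => -[].
- by move=> z z_neq0; rewrite -horner_F F_mulX hornerM hornerX [z * _]mulrC mulfK.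
- move=> z z01; have /andP [z_gt0 _] := z01.
  have := cheb_r_lt1 z z01; rewrite -subr_gt0 -horner_F F_mulX hornerM hornerX.
  by rewrite pmulr_rgt0.
Qed.

End ChebyshevQuotient.

Local Close Scope ring_scope.
Local Open Scope R_scope.

Theorem mainTheorem6 (d : nat) :
  (forall p : {poly R},
      (size p <= d.+1)%N ->
      (forall q : {poly R}, (size q <= d.+1)%N -> lsq_obj p <= lsq_obj q) ->
      forall z : R, 0 < z <= 1 -> 0 < horner p z)
  /\
  (forall mu : R, 0 < mu < 1 ->
      exists P : {poly R},
        size P = d.+1 /\
        (forall z : R, z <> 0 -> horner P z = (1 - cheb_r d mu z) / z) /\
        (forall z : R, 0 < z <= 1 -> 0 < horner P z)).
Proof.
split.
- move=> p size_p p_min z [/RltP z_gt0 /RleP z_le1]; apply/RltP.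
  apply: (@lsq_min_horner_gt0 _ _ size_p) => [q size_q|]; first exact/RleP/p_min.
  by rewrite z_gt0 z_le1.
- move=> mu [/RltP mu_gt0 /RltP mu_lt1].
  have [P [size_P PE P_gt0]] := @cheb_quotient d _ mu_gt0 mu_lt1.
  exists P; split=> //; split=> [z /eqP|z [/RltP z_gt0 /RleP z_le1]].
    exact: PE.
  by apply/RltP; rewrite P_gt0 // z_gt0 z_le1.
Qed.
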